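(* Let $F$ be a finite field of characteristic $3$. Let $k\ge 0$ be an integer, $m=3k+1$, and $t$ an integer with $t^3\equiv 1\pmod m$ and $\gcd(m,t-1)=1$. Let $G=T_{3m}=\langle x,y\mid x^m=y^3=1,\ y^{-1}xy=x^t\rangle$ (of order $3m$) and $FG$ its group algebra. Let $s\in FG$ be the sum of all elements of $G$ whose order is a power of $3$ (including the identity), and let $\mathrm{Anh}(s)=\{\alpha\in FG\mid \alpha s=s\alpha=0\}$. Then $\mathrm{Anh}(s)\subseteq J(FG)$.
   Context: $J(FG)$ denotes the Jacobson radical of $FG$. *)

From HB Require Import structures.
From mathcomp Require Import all_boot all_order all_algebra all_fingroup.
From mathcomp Require Import pgroup.
Set Implicit Arguments. Unset Strict Implicit. Unset Printing Implicit Defensive.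
Import GRing.Theory.
Local Open Scope ring_scope.
Local Open Scope group_scope.

Definition galg (F : fieldType) (gT : finGroupType) : Type := {ffun gT -> F}.

Section GAlg.
Variables (F : fieldType) (gT : finGroupType).
Local Notation A := (galg F gT).
HB.instance Definition _ := GRing.Zmodule.on A.

Definition galg_one : A := [ffun g => ((g == 1%g)%:R : F)].
Definition galg_mul (a b : A) : A :=
  [ffun g => (\sum_(h : gT) a h * b (h^-1 * g)%g)%R].

Lemma galg_mulA : associative galg_mul.
Proof.
move=> a b c; apply/ffunP=> g; rewrite /galg_mul !ffunE.
symmetry.
under eq_bigr => h _ do rewrite ffunE big_distrl /=.
rewrite exchange_big /=; apply: eq_bigr => k _.
rewrite ffunE big_distrr /= (reindex_inj (mulgI k)) /=.
by apply: eq_bigr => l _; rewrite mulKg invMg -mulgA mulrA.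
Qed.

Lemma galg_mul1 : left_id galg_one galg_mul.
Proof.
move=> b; apply/ffunP=> g; rewrite ffunE (bigD1 1%g) //= big1 ?ffunE.
  by rewrite eqxx mul1r invg1 mul1g addr0.
by move=> h /negbTE nh; rewrite ffunE nh mul0r.
Qed.

Lemma galg_mulr1 : right_id galg_one galg_mul.
Proof.
move=> a; apply/ffunP=> g; rewrite ffunE (bigD1 g) //= big1 ?ffunE.
  by rewrite mulVg eqxx mulr1 addr0.
move=> h nh; rewrite ffunE.
have -> : (h^-1 * g == 1)%g = false.
  by rewrite -(inj_eq (mulgI h)) mulKVg mulg1 eq_sym (negbTE nh).
by rewrite mulr0.
Qed.

Lemma galg_mulDl : left_distributive galg_mul +%R.
Proof.
move=> a b c; apply/ffunP=> g; rewrite !ffunE -big_split /=.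
by apply: eq_bigr => h _; rewrite ffunE mulrDl.
Qed.

Lemma galg_mulDr : right_distributive galg_mul +%R.
Proof.
move=> a b c; apply/ffunP=> g; rewrite !ffunE -big_split /=.
by apply: eq_bigr => h _; rewrite ffunE mulrDr.
Qed.

HB.instance Definition _ := GRing.Zmodule_isPzRing.Build A
  galg_mulA galg_mul1 galg_mulr1 galg_mulDl galg_mulDr.
End GAlg.

Lemma galg_mulE (F : fieldType) (gT : finGroupType) (a b : galg F gT) :
  (a * b)%R = galg_mul a b.
Proof. by []. Qed.

Definition galg_elt (F : fieldType) (gT : finGroupType) (g : gT) : galg F gT :=
  [ffun h => ((h == g)%:R : F)].

Definition sum_3elts (F : fieldType) (gT : finGroupType) : galg F gT :=
  (\sum_(g : gT | 3.-elt g) galg_elt F g)%R.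

Definition left_ideal (R : pzRingType) (I : R -> Prop) : Prop :=
  [/\ I 0%R, (forall a b, I a -> I b -> I (a - b)%R)
    & (forall r a, I a -> I (r * a)%R)].

Definition maximal_left_ideal (R : pzRingType) (I : R -> Prop) : Prop :=
  [/\ left_ideal I, ~ I 1%R
    & forall J : R -> Prop, left_ideal J -> ~ J 1%R ->
        (forall a, I a -> J a) -> forall a, J a -> I a].

Definition jacobson_radical (R : pzRingType) : R -> Prop :=
  fun a => forall I : R -> Prop, maximal_left_ideal I -> I a.

From HB Require Import structures.
From mathcomp Require Import all_boot all_order all_algebra all_fingroup.
From mathcomp Require Import pgroup cyclic ring zify.
From Stdlib Require Import Classical.
Import GRing.Theory.
Local Open Scope ring_scope.

Set Implicit Arguments. Unset Strict Implicit.

(* Let N = <[x]>, normal of order m = 1 (mod 3), so that G = <[y]> N.  The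
   3-elements of G are 1 and the elements outside N (the cosets y N and y^2 N
   consist of elements of order 3), hence s = 1 + G^ - N^, where N^ is
   idempotent because |N| = 1 in F.  Then alpha s = 0 forces alpha = alpha N^
   and augmentation 0; as g N^ only depends on the coset y^i N of g, this gives
   alpha = (y - 1) q N^ with q a polynomial in y and all three factors
   commuting, so alpha^3 = (y^3 - 1) q^3 N^ = 0 in characteristic 3.  The same
   holds for every r alpha, so F G alpha is a nil left ideal, hence lies in the
   Jacobson radical. *)

Lemma mulr_sum_expr_subr1 (R : pzRingType) (z : R) n :
  (\sum_(i < n) z ^+ i) * (1 - z) = 1 - z ^+ n.
Proof.
have cz : GRing.comm (\sum_(i < n) z ^+ i) (1 - z).
  apply/commr_sym/commr_sum => i _; apply/commr_sym.
  by apply: commrB; [exact: commr1 | exact/commr_sym/commrX/commr_refl].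
by rewrite cz -opprB mulNr -subrX1 opprB.
Qed.

Lemma expr3_subr1_eq0 (R : pzRingType) (z : R) :
  3%:R = 0 :> R -> z ^+ 3 = 1 -> (z - 1) ^+ 3 = 0.
Proof.
move=> R3 z3; have z2 : z *+ 2 = - z.
  by apply/eqP; rewrite -addr_eq0 -mulrSr -mulr_natr R3 mulr0.
have -> : (z - 1) ^+ 3 = (z - 1) * \sum_(i < 3) z ^+ i.
  rewrite exprS sqrrB1 z2 opprK !big_ord_recr big_ord0 /= add0r expr0 expr1.
  by congr (_ * _); rewrite [RHS]addrC [RHS]addrA [LHS]addrAC.
by rewrite -subrX1 z3 subrr.
Qed.

Lemma jacobson_radical_nil (R : pzRingType) (a : R) :
  (forall r : R, exists n, (r * a) ^+ n = 0) -> jacobson_radical a.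
Proof.
move=> nil_Ra I [[I0 IB IM] I'1 maxI]; apply: NNPP => I'a.
pose J b := exists i r, I i /\ b = i + r * a.
have idealJ : left_ideal J.
  split=> [|b c [i1 [r1 [Ii1 ->]]] [i2 [r2 [Ii2 ->]]]|r b [i [r' [Ii ->]]]].
  - by exists 0, 0; rewrite mul0r addr0.
  - by exists (i1 - i2), (r1 - r2); rewrite mulrBl opprD addrACA; split; first exact: IB.
  - by exists (r * i), (r * r'); rewrite mulrDr mulrA; split; first exact: IM.
have [i [r [Ii def1]]] : J 1.
  apply: NNPP => J'1; apply/I'a/(maxI J idealJ J'1); last first.
    by exists 0, 1; rewrite mul1r add0r.
  by move=> b Ib; exists b, 0; rewrite mul0r addr0.
(* [1 - r a] lies in [I] and is left invertible because [r a] is nilpotent. *)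
have [n ran0] := nil_Ra r.
apply: I'1; rewrite -[1](subr0) -ran0 -mulr_sum_expr_subr1.
by apply: IM; rewrite def1 addrK.
Qed.

Lemma dvdn_cube_root_unity (m a : nat) (t : int) :
    (m%:Z %| t ^+ 3 - 1)%Z -> coprimez m%:Z (t - 1) -> (a%:Z = t %[mod m%:Z])%Z ->
  (m %| a * a + a + 1)%N.
Proof.
move=> m_t3 m_t1 /eqP; rewrite eqz_mod_dvd => m_at.
have m_t2 : (m%:Z %| t ^+ 2 + t + 1)%Z.
  by rewrite -(Gauss_dvdzr _ m_t1) (_ : (t - 1) * _ = t ^+ 3 - 1) //; ring.
suff: (m%:Z %| (a * a + a + 1)%N%:Z)%Z by rewrite dvdzE.
rewrite !PoszD !PoszM.
rewrite (_ : _ + 1 = t ^+ 2 + t + 1 + (a%:Z - t) * (a%:Z + t + 1)); last by ring.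
by rewrite rpredD // dvdz_mulr.
Qed.

Section Metacyclic.
Local Open Scope group_scope.

Lemma expg3_mulg (gT : finGroupType) (y n : gT) :
  (y * n) ^+ 3 = y ^+ 3 * (n ^ (y ^+ 2) * n ^ y * n).
Proof.
by rewrite !conjgE !expgS expg0 !mulg1 !invMg !mulgA !mulgK.
Qed.

Lemma order_eq_card_mul (gT : finGroupType) (x y : gT) (m n : nat) :
    x ^+ m = 1 -> y ^+ n = 1 -> #|gT| = (n * m)%N -> <[y]> * <[x]> = [set: gT] ->
  #[x] = m.
Proof.
move=> xm yn cardG yxG.
have nm_gt0 : (0 < n * m)%N by rewrite -cardG -cardsT cardG_gt0.
have y_len : (#[y] <= n)%N by rewrite dvdn_leq ?order_dvdn ?yn //; nia.
have x_lem : (#[x] <= m)%N by rewrite dvdn_leq ?order_dvdn ?xm //; nia.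
have nm_le : (n * m <= n * #[x])%N.
  have := mul_cardG <[y]> <[x]>; rewrite yxG cardsT cardG => card_yx.
  apply: leq_trans (leq_pmulr _ (cardG_gt0 (<[y]> :&: <[x]>))) _.
  by rewrite -card_yx leq_mul2r y_len orbT.
by apply/eqP; rewrite eqn_leq x_lem -(@leq_pmul2l n) //; nia.
Qed.

Variables (gT : finGroupType) (x y : gT) (m a : nat).
Hypotheses (xm : x ^+ m = 1) (y3 : y ^+ 3 = 1) (xy : x ^ y = x ^+ a).
Hypothesis m_dvd : (m %| a * a + a + 1)%N.

Lemma norm_cycle_x : y \in 'N(<[x]>).
Proof. by rewrite inE -cycleJ cycle_subG xy mem_cycle. Qed.

Lemma gen_xy_mul : <<[set x; y]>> = <[y]> * <[x]>.
Proof.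
rewrite -norm_joinEl ?cycle_subG ?norm_cycle_x //; apply/eqP.
rewrite eqEsubset join_subG !sub1set (subsetP (joing_subr _ _) _ (cycle_id x)).
rewrite (subsetP (joing_subl _ _) _ (cycle_id y)) join_subG !cycle_subG.
by rewrite !mem_gen // !inE eqxx ?orbT.
Qed.

Lemma expg3_y_mul n : n \in <[x]> -> (y * n) ^+ 3 = 1.
Proof.
case/cycleP=> j ->; rewrite expg3_mulg y3 mul1g.
rewrite expgS expg1 conjgM !conjXg xy -expgM conjXg xy -!expgM -!expgD.
rewrite (_ : (_ + _ + j)%N = j * (a * a + a + 1))%N; last by ring.
by apply/eqP; rewrite -order_dvdn (dvdn_trans _ (dvdn_mull j m_dvd)) ?order_dvdn ?xm.
Qed.

Lemma expg3_notin_cycle g : g \in <[y]> * <[x]> -> g \notin <[x]> -> g ^+ 3 = 1.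
Proof.
case/mulsgP=> _ n /cycleP[i ->] xn ->; rewrite -(expg_mod i y3).
have : (i %% 3 < 3)%N by rewrite ltn_mod.
case: (i %% 3)%N => [|[|[|//]]] _; first by rewrite mul1g xn.
  by rewrite expg1 expg3_y_mul.
(* [y^2 n] is the inverse of [y (n^-1)^y], which lies in the coset [y <x>]. *)
have def_y2 : y ^+ 2 = y^-1 by apply: (mulgI y); rewrite -expgS y3 mulgV.
move=> _; apply: invg_inj; rewrite -expgVn invg1 invMg def_y2 invgK conjgC.
by rewrite expg3_y_mul // memJ_norm ?groupV ?norm_cycle_x.
Qed.

Lemma p3_elt_cycle g : coprime 3 m -> g \in <[y]> * <[x]> ->
  3.-elt g = (g == 1) || (g \notin <[x]>).
Proof.
move=> co3m yxg; have [->|ntg] := eqVneq g 1; first by rewrite p_elt1.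
have [xg|x'g] /= := boolP (g \in <[x]>); last first.
  by apply: (pnat_dvd _ (pnat_id _)) => //; rewrite order_dvdn expg3_notin_cycle.
have g_m : (#[g] %| m)%N by rewrite (dvdn_trans (order_dvdG xg)) ?order_dvdn ?xm.
apply/negP => /pnat_1 g1; move: ntg; rewrite -order_eq1 g1 //.
by rewrite p'natE // -prime_coprime // (coprime_dvdr g_m).
Qed.

End Metacyclic.

Section GroupAlgebra.
Variables (F : fieldType) (gT : finGroupType).
Local Notation A := (galg F gT).
Local Notation elt := (@galg_elt F gT).
Implicit Types (a b : A) (c : F) (g h k : gT).

Definition galg_cst c : A := [ffun g => c * (g == 1%g)%:R].

Definition galg_sum (S : {set gT}) : A := [ffun g => (g \in S)%:R].

Lemma galg_mul_ffunE a b h : (a * b) h = \sum_k a k * b (k^-1 * h)%g.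
Proof. by rewrite galg_mulE ffunE. Qed.

Lemma galg_cstMl c a : galg_cst c * a = [ffun h => c * a h].
Proof.
apply/ffunP=> h; rewrite galg_mul_ffunE ffunE (bigD1 1%g) //= big1 ?ffunE.
  by rewrite eqxx mulr1 invg1 mul1g addr0.
by move=> k /negbTE nk; rewrite ffunE nk mulr0 mul0r.
Qed.

Lemma galg_cstMr a c : a * galg_cst c = [ffun h => a h * c].
Proof.
apply/ffunP=> h; rewrite galg_mul_ffunE ffunE (bigD1 h) //= big1 ?ffunE.
  by rewrite mulVg eqxx mulr1 addr0.
move=> k /negbTE nk; rewrite ffunE -(inj_eq (mulgI k)) mulKVg mulg1 eq_sym nk.
by rewrite !mulr0.
Qed.

Lemma galg_cst_comm c a : GRing.comm (galg_cst c) a.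
Proof.
by rewrite /GRing.comm galg_cstMl galg_cstMr; apply/ffunP=> h; rewrite !ffunE mulrC.
Qed.

Lemma galg_cst_sum (I : finType) (f : I -> F) :
  \sum_i galg_cst (f i) = galg_cst (\sum_i f i).
Proof.
apply/ffunP=> h; rewrite sum_ffunE ffunE mulr_suml.
by apply: eq_bigr => i _; rewrite ffunE.
Qed.

Lemma galg_cst0 : galg_cst 0 = 0.
Proof. by apply/ffunP=> h; rewrite !ffunE mul0r. Qed.

Lemma galg_natr n : n%:R = galg_cst n%:R.
Proof. by apply/ffunP=> h; rewrite ffunMnE !ffunE mulr_natl. Qed.

Lemma galg_eltMl g a h : (elt g * a) h = a (g^-1 * h)%g.
Proof.
rewrite galg_mul_ffunE (bigD1 g) //= big1 ?ffunE ?eqxx ?mul1r ?addr0 //.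
by move=> k /negbTE nk; rewrite ffunE nk mul0r.
Qed.

Lemma galg_eltMr a g h : (a * elt g) h = a (h * g^-1)%g.
Proof.
rewrite galg_mul_ffunE (bigD1 (h * g^-1)%g) //= big1 ?ffunE.
  by rewrite invMg invgK mulgKV eqxx mulr1 addr0.
move=> k nk; rewrite ffunE.
suff /negbTE-> : (k^-1 * h != g)%g by rewrite mulr0.
by apply: contra nk => /eqP <-; rewrite invMg invgK mulgA mulgV mul1g.
Qed.

Lemma galg_eltM g g' : elt g * elt g' = elt (g * g')%g.
Proof.
by apply/ffunP=> h; rewrite galg_eltMl !ffunE -(inj_eq (mulgI g)) mulKVg eq_sym.
Qed.

Lemma galg_elt1 : elt 1%g = 1.
Proof. by []. Qed.

Lemma galg_eltX g n : elt (g ^+ n)%g = elt g ^+ n.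
Proof.
elim: n => [|n IHn]; first by rewrite expg0 galg_elt1.
by rewrite expgS exprS -galg_eltM IHn.
Qed.

Lemma galg_expand a : a = \sum_g galg_cst (a g) * elt g.
Proof.
apply/ffunP=> h; rewrite sum_ffunE (bigD1 h) //= big1 => [|k nk].
  by rewrite galg_cstMl !ffunE eqxx mulr1 addr0.
by rewrite galg_cstMl !ffunE eq_sym (negbTE nk) mulr0.
Qed.

Lemma mulr_galg_sumT a : a * galg_sum [set: gT] = [ffun _ => \sum_g a g].
Proof.
apply/ffunP=> h; rewrite galg_mul_ffunE ffunE.
by apply: eq_bigr => k _; rewrite ffunE inE mulr1.
Qed.

Lemma sum_galg_sum (S : {set gT}) : \sum_g galg_sum S g = #|S|%:R.
Proof.
rewrite (eq_bigr (fun g => if g \in S then 1 else 0)) => [|g _]; last first.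
  by rewrite ffunE; case: (g \in S).
by rewrite -big_mkcond sumr_const.
Qed.

Section SubgroupSum.
Variable H : {group gT}.

Lemma galg_elt_mul_sum g n :
  n \in H -> elt (g * n)%g * galg_sum H = elt g * galg_sum H.
Proof.
by move=> Hn; apply/ffunP=> h; rewrite !galg_eltMl !ffunE invMg -mulgA groupMl ?groupV.
Qed.

Lemma galg_elt_sum_comm g : g \in 'N(H)%g -> GRing.comm (elt g) (galg_sum H).
Proof.
move=> nHg; apply/ffunP=> h; rewrite galg_eltMl galg_eltMr !ffunE.
by rewrite -[in RHS](memJ_norm _ nHg) conjgE mulgKV.
Qed.

Hypothesis cardH1 : #|H|%:R = 1 :> F.

Lemma galg_sumT_mul : galg_sum [set: gT] * galg_sum H = galg_sum [set: gT].
Proof.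
apply/ffunP=> h; rewrite galg_mul_ffunE ffunE inE.
rewrite (reindex_inj (inj_comp (mulgI h) (@invg_inj gT))) /=.
under eq_bigr => k _ do rewrite ffunE inE mul1r invMg invgK mulgKV.
by rewrite sum_galg_sum.
Qed.

Lemma galg_sum_idem : galg_sum H * galg_sum H = galg_sum H.
Proof.
apply/ffunP=> h; rewrite galg_mul_ffunE [RHS]ffunE; have [Hh|H'h] := boolP (h \in H).
  rewrite -cardH1 -sum_galg_sum; apply: eq_bigr => k _.
  by rewrite !ffunE (groupMr _ Hh) groupV -natrM mulnb andbb.
rewrite big1 // => k _; rewrite !ffunE; have [Hk|] := boolP (k \in H); last by rewrite mul0r.
by rewrite groupMl ?groupV // (negbTE H'h) mulr0.
Qed.

End SubgroupSum.

Lemma sum_3elts_eq (N : {group gT}) :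
    (forall h, (3.-elt h)%g = (h == 1%g) || (h \notin N)) ->
  sum_3elts F gT = 1 + galg_sum [set: gT] - galg_sum N.
Proof.
move=> elt3N; apply/ffunP=> h; rewrite /sum_3elts sum_ffunE !ffunE.
rewrite big_mkcond (bigD1 h) //= big1 => [|k nk]; last first.
  by rewrite ffunE eq_sym (negbTE nk); case: ifP.
rewrite ffunE eqxx addr0 elt3N inE.
have [->|nh1] := eqVneq h 1%g; first by rewrite group1 addrK.
by case: (h \in N); rewrite /= ?add0r ?subrr ?subr0.
Qed.

End GroupAlgebra.
Arguments galg_cst {F gT}.

Section NilAnnihilator.
Variables (F : fieldType) (gT : finGroupType) (N : {group gT}) (y : gT).
Hypotheses (nNy : y \in 'N(N)%g) (yNG : (<[y]> * N)%g = [set: gT]) (y3 : (y ^+ 3 = 1)%g).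
Hypotheses (cardN1 : #|N|%:R = 1 :> F) (F3 : 3%:R = 0 :> F).
Hypothesis elt3N : forall h, (3.-elt h)%g = (h == 1%g) || (h \notin N).
Local Notation A := (galg F gT).
Local Notation elt := (@galg_elt F gT).
Local Notation e := (galg_sum F N).
Implicit Types (b : A) (g : gT).

Lemma annihilator_sum_3elts b :
  b * sum_3elts F gT = 0 -> \sum_g b g = 0 /\ b * e = b.
Proof.
rewrite (sum_3elts_eq F elt3N) mulrBr mulrDr mulr1 => bs0.
have bG0 : b * galg_sum F [set: gT] = 0.
  have := congr1 (fun c => c * e) bs0.
  rewrite !mulrBl !mulrDl mul0r -!mulrA galg_sum_idem // galg_sumT_mul //.
  by rewrite addrAC subrr add0r.
split; first by have /ffunP/(_ 1%g) := bG0; rewrite mulr_galg_sumT !ffunE.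
by move/eqP: bs0; rewrite bG0 addr0 subr_eq0 eq_sym => /eqP.
Qed.

Lemma exists_yexp g : exists i, ((y ^+ i)^-1 * g \in N)%g.
Proof.
have : g \in (<[y]> * N)%g by rewrite yNG inE.
by case/mulsgP=> _ n /cycleP[i ->] Nn ->; exists i; rewrite mulKg.
Qed.

Definition yexp g := xchoose (exists_yexp g).

Lemma galg_elt_mul_sum_yexp g : elt g * e = elt y ^+ yexp g * e.
Proof.
rewrite -galg_eltX -{1}(mulKVg (y ^+ yexp g)%g g) galg_elt_mul_sum //.
exact: xchooseP (exists_yexp g).
Qed.

Lemma galg_aug0_factor b : \sum_g b g = 0 -> b * e = b ->
  exists q, [/\ GRing.comm (elt y) q, GRing.comm q e & b = (elt y - 1) * q * e].
Proof.
move=> aug0 be; set Y := elt y.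
exists (\sum_g galg_cst (b g) * \sum_(j < yexp g) Y ^+ j); split.
- apply/commr_sum => g _; apply: commrM; first exact/commr_sym/galg_cst_comm.
  by apply/commr_sum => j _; apply/commrX/commr_refl.
- apply/commr_sym/commr_sum => g _; apply: commrM; first exact/commr_sym/galg_cst_comm.
  by apply/commr_sum => j _; apply/commrX/commr_sym/galg_elt_sum_comm.
rewrite -{1}be {1}(galg_expand b) mulr_suml.
under eq_bigr => g _ do
  rewrite -mulrA galg_elt_mul_sum_yexp -[Y ^+ _](subrK 1) mulrDl mul1r mulrDr.
rewrite big_split /= -mulr_suml galg_cst_sum aug0 galg_cst0 mul0r addr0.
rewrite mulr_sumr mulr_suml; apply: eq_bigr => g _.
by rewrite subrX1 !mulrA (galg_cst_comm _ (Y - 1)).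
Qed.

Lemma annihilator_sum_3elts_cube0 b : b * sum_3elts F gT = 0 -> b ^+ 3 = 0.
Proof.
case/annihilator_sum_3elts => aug0 be.
have [q [cYq cqe ->]] := galg_aug0_factor aug0 be.
have cY1q : GRing.comm (elt y - 1) q.
  by apply/commr_sym/commrB; [exact/commr_sym | exact: commr1].
have cY1e : GRing.comm (elt y - 1) e.
  by apply/commr_sym/commrB; [exact/commr_sym/galg_elt_sum_comm | exact: commr1].
rewrite exprMn_comm; last exact/commr_sym/commrM/commr_sym.
rewrite exprMn_comm // expr3_subr1_eq0 ?mul0r //; last by rewrite -galg_eltX y3.
by rewrite galg_natr F3 galg_cst0.
Qed.

End NilAnnihilator.

Theorem proposition3p4
  (F : finFieldType) (k : nat) (t : int) (gT : finGroupType) (x y : gT) :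
  3%N \in [pchar F] ->
  ((3 * k).+1%:Z %| t ^+ 3 - 1)%Z ->
  coprimez (3 * k).+1%:Z (t - 1) ->
  <<[set x; y]>>%g = [set: gT] ->
  (x ^+ (3 * k).+1)%g = 1%g ->
  (y ^+ 3)%g = 1%g ->
  (x ^ y)%g = (x ^+ `|(t %% (3 * k).+1%:Z)%Z|%N)%g ->
  #|gT| = (3 * (3 * k).+1)%N ->
  forall alpha : galg F gT,
    alpha * sum_3elts F gT = 0 -> sum_3elts F gT * alpha = 0 ->
    jacobson_radical alpha.
Proof.
move=> charF3 m_t3 m_t1 genG xm y3 xy cardG alpha alpha_s _.
set m := (3 * k).+1 in m_t3 m_t1 xm xy cardG.
set a := `|(t %% m%:Z)%Z|%N in xy.
have m_a : (m %| a * a + a + 1)%N.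
  by apply: dvdn_cube_root_unity m_t3 m_t1 _; rewrite gez0_abs ?modz_ge0 ?modz_mod.
have yxG : (<[y]> * <[x]>)%g = [set: gT] by rewrite -(gen_xy_mul xy) genG.
have co3m : coprime 3 m by rewrite /coprime /m mulnC -[(k * 3).+1]addn1 gcdnMDl.
have cardX1 : #|<[x]>%g|%:R = 1 :> F.
  have -> : #|<[x]>%g| = m := order_eq_card_mul xm y3 cardG yxG.
  by rewrite /m -[(3 * k).+1]addn1 natrD natrM (pcharf0 charF3) mul0r add0r.
apply: jacobson_radical_nil => r; exists 3%N.
apply: (annihilator_sum_3elts_cube0 (N := <[x]>%G) (y := y)) => //.
- exact: norm_cycle_x xy.
- exact: pcharf0 charF3.
- by move=> h; rewrite (p3_elt_cycle xm y3 xy m_a co3m) // yxG inE.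
- by rewrite -mulrA alpha_s mulr0.
Qed.
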